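(* Let $\ell,m$ be positive integers and let $S(\ell,m)$ be the $(\ell+m)\times(\ell+m)$ coloring matrix whose first $\ell$ rows consist entirely of ones and whose remaining $m$ rows consist entirely of zeroes. Then for all $n>1$, $$t_{S(\ell,m)}(n)=\sum_{k=1}^{n-1}N_{n-1,k}\,\ell^{n-k}(\ell+m)^k=\sum_{k=1}^{n-1}\frac{1}{n-1}\binom{n-1}{k}\binom{n-1}{k-1}\ell^{n-k}(\ell+m)^k.$$
   Context: A plane tree is an unlabeled rooted tree in which the children of every vertex are linearly ordered. A coloring matrix is a square matrix $A=(a_{ij})$ with entries in $\{0,1\}$. An $A$-coloring of a plane tree assigns to each vertex a color (an index of a row of $A$) such that whenever a vertex of color $j$ is a child of a vertex of color $i$, $a_{ij}=1$. Let $t_A(n)$ be the number of pairs (plane tree with $n$ vertices, $A$-coloring of it). $N_{n,k}=\frac1n\binom{n}{k}\binom{n}{k-1}$ denotes the Narayana numbers. *)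

From HB Require Import structures.
From mathcomp Require Import all_boot all_order all_algebra.
From Stdlib Require Import List.
Set Implicit Arguments. Unset Strict Implicit. Unset Printing Implicit Defensive.

Inductive ctree (k : nat) : Type :=
  CNode : 'I_k -> list (ctree k) -> ctree k.

Definition color (k : nat) (t : ctree k) : 'I_k :=
  let: CNode c _ := t in c.

Fixpoint csize (k : nat) (t : ctree k) : nat :=
  let: CNode _ ts := t in (sumn (map (@csize k) ts)).+1.

Fixpoint valid (k : nat) (A : 'M[bool]_k) (t : ctree k) : bool :=
  let: CNode c ts := t in
  all (fun s => A c (color s) && valid A s) ts.

Definition tA_is (k : nat) (A : 'M[bool]_k) (n c : nat) : Prop :=
  exists L : list (ctree k),
    NoDup L /\ (forall x, In x L <-> (valid A x /\ csize x = n)) /\ length L = c.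

Definition Smat (l m : nat) : 'M[bool]_(l + m) :=
  \matrix_(i, j) (i < l)%N.

Definition narayana (n k : nat) : rat :=
  (n%:R)^-1 * ('C(n, k) * 'C(n, k.-1))%:R.

From HB Require Import structures.
From mathcomp Require Import all_boot all_order all_algebra.
From mathcomp Require Import ring lra zify.
From Stdlib Require List.
Import GRing.Theory Num.Theory.
Set Implicit Arguments. Unset Strict Implicit. Unset Printing Implicit Defensive.

(* A vertex with a child must carry one of the l colours whose rows are all
   ones, while a leaf may carry any of the l + m colours.  So t_S(n) is the sum,
   over plane trees with n vertices, of l^(#internal vertices) (l+m)^(#leaves),
   and N_{n-1,k} counts the plane trees with n vertices and k leaves.

   To get a recursion we count ordered forests: deleting the root of the first
   tree of a forest with r+1 trees and N+1 vertices leaves a forest with r+d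
   trees and N vertices, d being the number of children of that root, and d > 0
   is allowed for l colours only.  With a = l and b = l + m, the recursion is
   solved by the polynomial whose coefficient of a^i b^(N-i) is
   r/N C(N,i) C(N-r-1,i-1), the number of forests with i internal vertices.
   The sum over d is a tail sum in r, which also has a closed form, so the
   verification reduces to binomial identities.  For r = 1 these coefficients
   are the Narayana numbers. *)

Section CtreeEqType.
Variable K : nat.

Fixpoint ctree_nested_ind (P : ctree K -> Prop)
    (IH : forall c ts, List.Forall P ts -> P (CNode c ts)) (t : ctree K) : P t :=
  let: CNode c ts := t in
  IH c ts ((fix forall_ts ts : List.Forall P ts :=
              if ts is t :: ts'
              then List.Forall_cons t (ctree_nested_ind IH t) (forall_ts ts')
              else List.Forall_nil P) ts).

Fixpoint ctree_enc (t : ctree K) : GenTree.tree 'I_K :=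
  let: CNode c ts := t in GenTree.Node 0 (GenTree.Leaf c :: map ctree_enc ts).

Lemma ctree_enc_inj : injective ctree_enc.
Proof.
elim/ctree_nested_ind => c ts IH [c' ts'] /= [-> e]; congr CNode.
elim: ts ts' IH e => [|t ts IHts] [|t' ts'] //= /List.Forall_cons_iff [Ht Hts] [e1 e2].
by rewrite (Ht _ e1) (IHts _ Hts e2).
Qed.

End CtreeEqType.

HB.instance Definition _ K := Equality.copy (ctree K) (inj_type (@ctree_enc_inj K)).

Lemma InP (T : eqType) (x : T) (s : seq T) : reflect (List.In x s) (x \in s).
Proof.
elim: s => [|y s IH] /=; first by constructor.
rewrite in_cons; apply: (iffP orP) => [[/eqP ->|/IH]|[->|/IH]]; by [left|right].
Qed.

Lemma uniq_NoDup (T : eqType) (s : seq T) : uniq s -> List.NoDup s.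
Proof.
elim: s => [|x s IH] /=; first by constructor.
by case/andP => /InP xs us; constructor; last exact: IH.
Qed.

Lemma length_size (T : Type) (s : seq T) : length s = size s.
Proof. by elim: s => //= x s ->. Qed.

Lemma List_mapE (S T : Type) (f : S -> T) (s : seq S) : List.map f s = map f s.
Proof. by elim: s => //= x s ->. Qed.

Lemma uniq_flatten_map (S T : eqType) (F : S -> seq T) (s : seq S) :
  uniq s -> {in s, forall x, uniq (F x)} ->
  (forall x y z, x \in s -> y \in s -> z \in F x -> z \in F y -> x = y) ->
  uniq (flatten (map F s)).
Proof.
elim: s => [|x s IH] //= /andP [xs us] uF disj.
rewrite cat_uniq uF ?mem_head //= IH //; first last.
- by move=> y y' z ys y's; apply: disj; rewrite in_cons ?ys ?y's orbT.
- by move=> y ys; apply: uF; rewrite in_cons ys orbT.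
rewrite andbT; apply/hasPn => z /flatten_mapP [y ys zy]; apply: contra xs => zx.
by rewrite (disj x y z) ?mem_head ?in_cons ?ys ?orbT.
Qed.

Lemma csizeE K (c : 'I_K) ts : csize (CNode c ts) = (sumn (map (@csize K) ts)).+1.
Proof. by rewrite /= List_mapE. Qed.

Lemma size_le_sumn_csize K (ts : seq (ctree K)) : size ts <= sumn (map (@csize K) ts).
Proof. by elim: ts => //= -[c ss] ts IH; rewrite csizeE; lia. Qed.

Fixpoint forest_count (a b N r : nat) {struct N} : nat :=
  match N, r with
  | 0, _ => r == 0
  | N'.+1, 0 => 0
  | N'.+1, r'.+1 =>
      b * forest_count a b N' r' + a * \sum_(d < N') forest_count a b N' (r'.+1 + d)
  end.

Section Forests.
Variables l m : nat.
Local Notation K := (l + m).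
Local Notation ctree := (ctree K).

Lemma valid_Smat_node (c : 'I_K) ts :
  valid (Smat l m) (CNode c ts) = (nilp ts || (c < l)) && all (valid (Smat l m)) ts.
Proof.
rewrite /= (@eq_all _ _ (fun s => (c < l) && valid (Smat l m) s)) => [|s].
  by case: (c < l); rewrite ?orbT ?orbF //; case: ts.
by rewrite mxE.
Qed.

Definition valid_forest (N r : nat) (fs : seq ctree) : bool :=
  [&& size fs == r, all (valid (Smat l m)) fs & sumn (map (@csize K) fs) == N].

Lemma valid_forest_cons N r c ts rest :
  valid_forest N.+1 r.+1 (CNode c ts :: rest)
  = (nilp ts || (c < l)) && valid_forest N (r + size ts) (ts ++ rest).
Proof.
rewrite /valid_forest -cat1s !size_cat !all_cat all_seq1 valid_Smat_node !map_cat !sumn_cat.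
have -> : sumn (map (@csize K) [:: CNode c ts]) = (sumn (map (@csize K) ts)).+1.
  by rewrite /= List_mapE addn0.
rewrite addSn eqSS add1n eqSS [size ts + _]addnC eqn_add2r.
by case: (_ || _); case: (all _ ts); rewrite /= ?andbF.
Qed.

Lemma valid_forest0 r fs : valid_forest 0 r fs = (fs == [::]) && (r == 0).
Proof.
rewrite /valid_forest; case: fs => [|[c ts] fs] /=; first by rewrite andbT eq_sym.
by rewrite addSn !andbF.
Qed.

Lemma valid_forestS0 N fs : valid_forest N.+1 0 fs = false.
Proof. by case: fs. Qed.

Definition root_arities (c : 'I_K) (N : nat) : seq nat :=
  if c < l then iota 0 N.+1 else [:: 0].

Fixpoint forests (N r : nat) {struct N} : seq (seq ctree) :=
  match N, r with
  | 0, _ => if r == 0 then [:: [::]] else [::]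
  | N'.+1, 0 => [::]
  | N'.+1, r'.+1 =>
      flatten [seq flatten [seq [seq CNode c (take d fs) :: drop d fs
                                | fs <- forests N' (r' + d)]
                           | d <- root_arities c N']
              | c <- enum 'I_K]
  end.

Lemma mem_forests N r fs : (fs \in forests N r) = valid_forest N r fs.
Proof.
elim: N r fs => [|N IH] [|r] fs /=.
- by rewrite valid_forest0 mem_seq1 andbT.
- by rewrite valid_forest0 andbF.
- by rewrite valid_forestS0.
apply/idP/idP.
  case/flatten_mapP => c _ /flatten_mapP [d dc /mapP [gs]].
  rewrite IH => gs_ok ->.
  have d_gs : d <= size gs by case/and3P: gs_ok => /eqP -> _ _; rewrite leq_addl.
  rewrite valid_forest_cons cat_take_drop size_takel // gs_ok andbT.
  move: dc; rewrite /root_arities; case: (c < l); rewrite ?orbT ?orbF //.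
  by rewrite mem_seq1 => /eqP ->; rewrite take0.
case: fs => [|[c ts] rest] //; rewrite valid_forest_cons => /andP [ts_ok gs_ok].
apply/flatten_mapP; exists c; first by rewrite mem_enum.
apply/flatten_mapP; exists (size ts).
  move: ts_ok; rewrite /root_arities; case: (c < l) => [_|]; last first.
    by rewrite orbF; case: ts {gs_ok}.
  case/and3P: gs_ok => _ _ /eqP <-; rewrite mem_iota ltnS map_cat sumn_cat.
  by have := size_le_sumn_csize ts; lia.
by apply/mapP; exists (ts ++ rest); rewrite ?IH ?take_size_cat ?drop_size_cat.
Qed.

Lemma forests_uniq N r : uniq (forests N r).
Proof.
elim: N r => [|N IH] [|r] //=.
apply: uniq_flatten_map => [|c _|c c' fs _ _]; first exact: enum_uniq.
  apply: uniq_flatten_map => [|d _|d d' fs _ _].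
  - by rewrite /root_arities; case: ifP => _; [exact: iota_uniq|].
  - rewrite map_inj_in_uniq ?IH // => gs gs'.
    rewrite !mem_forests => /and3P [/eqP s1 _ _] /and3P [/eqP s2 _ _] [e1 e2].
    by rewrite -(cat_take_drop d gs) e1 e2 cat_take_drop.
  - move=> /mapP [gs + ->] /mapP [gs' + [e _]].
    rewrite !mem_forests => /and3P [/eqP s1 _ _] /and3P [/eqP s2 _ _].
    by have := congr1 size e; rewrite !size_takel ?s1 ?s2 ?leq_addl.
case/flatten_mapP => d _ /mapP [gs _ ->].
by case/flatten_mapP => d' _ /mapP [gs' _ [->]].
Qed.

Lemma size_flatten_map (S T : Type) (F : S -> seq T) (s : seq S) :
  size (flatten (map F s)) = \sum_(x <- s) size (F x).
Proof. by elim: s => [|x s IH]; rewrite ?big_nil ?big_cons //= size_cat IH. Qed.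

Lemma size_forests N r : size (forests N r) = forest_count l (l + m) N r.
Proof.
elim: N r => [|N IH] [|r] //=.
have size_root c : size (flatten [seq [seq CNode c (take d fs) :: drop d fs
                                      | fs <- forests N (r + d)]
                                 | d <- root_arities c N])
    = if c < l then forest_count l K N r + \sum_(d < N) forest_count l K N (r.+1 + d)
      else forest_count l K N r.
  rewrite size_flatten_map /root_arities; case: (c < l); last first.
    by rewrite big_seq1 size_map IH addn0.
  rewrite -[iota 0 N.+1]/(index_iota 0 N.+1) big_nat_recl // big_mkord size_map IH addn0.
  by congr (_ + _); apply: eq_bigr => d _; rewrite size_map IH addnS -addSn.
rewrite size_flatten_map big_enum /= big_split_ord /=.
under eq_bigr do rewrite size_root /= ltn_ord.
under [X in _ + X]eq_bigr do rewrite size_root /= ltnNge leq_addr.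
by rewrite !sum_nat_const !card_ord mulnDr addnAC -mulnDl.
Qed.

Definition trees (n : nat) : seq ctree := flatten (forests n 1).

Lemma mem_forests1 n fs :
  fs \in forests n 1 -> exists2 t, fs = [:: t] & valid (Smat l m) t && (csize t == n).
Proof.
rewrite mem_forests => /and3P [].
by case: fs => [|t [|]] //= _ /andP [vt _]; rewrite addn0 => nt; exists t; rewrite ?vt.
Qed.

Lemma mem_trees n x : (x \in trees n) = valid (Smat l m) x && (csize x == n).
Proof.
apply/flattenP/idP => [[fs /mem_forests1 [t -> ok]]|ok].
  by rewrite mem_seq1 => /eqP ->.
by exists [:: x]; rewrite ?mem_seq1 // mem_forests /valid_forest /= andbT addn0.
Qed.

Lemma trees_uniq n : uniq (trees n).
Proof.
rewrite /trees -[forests n 1]map_id; apply: uniq_flatten_map => [|fs|fs gs x].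
- exact: forests_uniq.
- by case/mem_forests1 => t ->.
- case/mem_forests1 => t -> _ /mem_forests1 [t' -> _].
  by rewrite !mem_seq1 => /eqP -> /eqP ->.
Qed.

Lemma size_trees n : size (trees n) = forest_count l (l + m) n 1.
Proof.
rewrite -size_forests /trees -(map_id (forests n 1)) size_flatten_map map_id.
by rewrite -sum1_size; apply: eq_big_seq => fs /mem_forests1 [t -> _].
Qed.

Lemma tA_is_forest_count n : tA_is (Smat l m) n (forest_count l (l + m) n 1).
Proof.
exists (trees n); split; first exact/uniq_NoDup/trees_uniq.
split; last by rewrite length_size size_trees.
move=> t; rewrite (rwP (InP _ _)) mem_trees.
by split => [/andP [vt /eqP]|[-> ->]]; rewrite ?eqxx.
Qed.

End Forests.

Local Open Scope ring_scope.

(* Side conditions [n%:R != 0] of [field], with n a sum of successors, become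
   linear once every cast is abstracted as a nonnegative variable. *)
Ltac field_nat_side :=
  repeat (apply/andP; split);
  repeat match goal with |- context [?k%:R] =>
    let x := fresh "x" in
    set x := (k%:R : rat); have : 0 <= x by exact: ler0n; clearbody x end;
  move=> *; apply/eqP; lra.

Lemma natr_bin_diag (n j : nat) :
  'C(n.+1, j.+1)%:R = n.+1%:R * 'C(n, j)%:R / j.+1%:R :> rat.
Proof.
have /(congr1 (fun x : nat => x%:R : rat)) := mul_bin_diag n.+1 j.
by rewrite /= !natrM => ->; field; field_nat_side.
Qed.

Lemma natr_bin_left (n j : nat) :
  'C(n, j.+1)%:R = (n - j)%:R * 'C(n, j)%:R / j.+1%:R :> rat.
Proof.
have /(congr1 (fun x : nat => x%:R : rat)) := mul_bin_left n j.
by rewrite /= !natrM => <-; field; field_nat_side.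
Qed.

(* Number of plane forests with r trees, N vertices and i internal vertices:
   r/N C(N,i) C(N-r-1,i-1), the degenerate cases r = 0 and r = N made explicit. *)
Definition forest_coef (N r i : nat) : rat :=
  if r == 0%N then ((N == 0%N) && (i == 0%N))%:R
  else if (N < r)%N then 0
  else if r == N then (i == 0%N)%:R
  else if i == 0%N then 0
  else r%:R / N%:R * ('C(N, i) * 'C(N - r - 1, i.-1))%:R.

(* For r > 0, the tail sum of [forest_coef N r' i] over r' >= r. *)
Definition forest_tail_coef (N r i : nat) : rat :=
  if (N < r)%N then 0
  else ('C(N, i) * 'C(N - r, i))%:R
       - i%:R / N%:R * ('C(N, i) * 'C(N - r + 1, i.+1))%:R.

Lemma forest_coef_small (N r i : nat) : (N < i)%N -> forest_coef N r i = 0.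
Proof.
move=> Ni; rewrite /forest_coef (_ : i == 0%N = false) 1?andbF; last by lia.
by do 3 case: ifP => // _; rewrite bin_small // mul0n mulr0.
Qed.

Lemma forest_tail_coef_small (N r i : nat) :
  (N < r)%N -> forest_tail_coef N r i = 0.
Proof. by rewrite /forest_tail_coef => ->. Qed.

Lemma forest_tail_coef_rec (N r i : nat) : (0 < r)%N ->
  forest_tail_coef N r i = forest_coef N r i + forest_tail_coef N r.+1 i.
Proof.
move=> r0; rewrite /forest_tail_coef /forest_coef (_ : r == 0%N = false); last by lia.
have [Nr|rN] := ltnP N r; first by rewrite ltnW // addr0.
rewrite (_ : (N < r.+1)%N = (r == N)); last by lia.
case: eqP => [<-|/eqP rNe].
  rewrite subnn add0n; case: i => [|i]; first by rewrite !bin0 !mul0r subr0.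
  by rewrite (@bin_small 0 i.+1) // (@bin_small 1 i.+2) // !muln0 mulr0 subr0.
have [M ->] : exists M, N = (r + M.+1)%N by exists (N - r.+1)%N; lia.
rewrite (_ : (r + M.+1 - r - 1 = M)%N); last by lia.
rewrite (_ : (r + M.+1 - r = M.+1)%N); last by lia.
rewrite (_ : (r + M.+1 - r.+1 = M)%N); last by lia.
case: i => [|j]; first by rewrite !bin0 !mul0r !subr0 add0r.
have binM : 'C(M, j.+1)%:R = 'C(M.+1, j.+1)%:R - 'C(M, j)%:R :> rat.
  by rewrite binS natrD addrK.
rewrite succnK !addn1 (binS M.+1 j.+1) !natrM (natrD _ 'C(M.+1, j.+2)) binM.
rewrite (natr_bin_diag M j) (natrD _ r M.+1) /=.
by field; field_nat_side.
Qed.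

Lemma forest_coef_identity (r M j : nat) (N := (r + M.+1)%N) :
  r.+1%:R / N.+1%:R * ('C(N.+1, j.+1) * 'C(M, j))%:R =
  r%:R / N%:R * ('C(N, j.+1) * 'C(M, j))%:R
  + (('C(N, j) * 'C(M, j))%:R - j%:R / N%:R * ('C(N, j) * 'C(M.+1, j.+1))%:R)
  :> rat.
Proof.
rewrite !natrM natr_bin_diag natr_bin_left (natr_bin_diag M j).
have [jN|Nj] := leqP j N; last first.
  by rewrite bin_small // !(mul0r, mulr0, subr0, addr0).
by rewrite natrB // /N !natrD; field; field_nat_side.
Qed.

(* Removing the root of the first tree: it is a leaf, or its j+1 children join
   the remaining trees. *)
Lemma forest_coef_rec (N r i : nat) :
  forest_coef N.+1 r.+1 i
  = forest_coef N r i + (if i is j.+1 then forest_tail_coef N r.+1 j else 0).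
Proof.
rewrite /forest_coef /forest_tail_coef /=.
have [Nr|rN] := ltnP N r.
  rewrite ltnS Nr (_ : (N < r.+1)%N) 1?(_ : r == 0%N = false); try lia.
  by case: i => *; ring.
case: (eqVneq r N) => [<-|rNe].
  by rewrite ltnn eqxx ltnSn; case: (r == 0%N); case: i => * /=; ring.
have [M eN] : exists M, N = (r + M.+1)%N by exists (N - r.+1)%N; lia.
rewrite (_ : (N.+1 < r.+1)%N = false); last by lia.
rewrite (_ : (r.+1 == N.+1) = false); last by lia.
rewrite (_ : (N < r.+1)%N = false); last by lia.
rewrite (_ : (N.+1 - r.+1 - 1 = M)%N); last by lia.
rewrite (_ : (N - r.+1 + 1 = M.+1)%N); last by lia.
rewrite (_ : (N - r.+1 = M)%N); last by lia.
rewrite (_ : (N == 0%N) = false); last by lia.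
case: i => [|j]; first by case: (r == 0%N); rewrite addr0.
rewrite /= eN; case: (eqVneq r 0%N) => [->|r0]; last exact: forest_coef_identity.
by rewrite forest_coef_identity; ring.
Qed.

Lemma sum_forest_coef (N r i K : nat) : (0 < r)%N ->
  \sum_(d < K) forest_coef N (r + d) i
  = forest_tail_coef N r i - forest_tail_coef N (r + K) i.
Proof.
move=> r0; elim: K => [|K IH]; first by rewrite big_ord0 addn0 subrr.
rewrite big_ord_recr /= IH (@forest_tail_coef_rec N (r + K) i); last by lia.
by rewrite addnS; ring.
Qed.

Section ForestPoly.
Variables a b : rat.

Definition forest_poly (N r : nat) : rat :=
  \sum_(i < N.+1) forest_coef N r i * (a ^+ i * b ^+ (N - i)).

Definition forest_tail_poly (N r : nat) : rat :=
  \sum_(i < N.+1) forest_tail_coef N r i * (a ^+ i * b ^+ (N - i)).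

Lemma sum_forest_poly (N r : nat) :
  \sum_(d < N) forest_poly N (r.+1 + d) = forest_tail_poly N r.+1.
Proof.
rewrite /forest_poly exchange_big; apply: eq_bigr => i _.
rewrite -mulr_suml sum_forest_coef // (@forest_tail_coef_small N (r.+1 + N)) ?subr0 //.
lia.
Qed.

Lemma forest_poly0r (r : nat) : forest_poly 0 r = (r == 0%N)%:R.
Proof. by rewrite /forest_poly big_ord1 /forest_coef /=; case: r => /= *; ring. Qed.

Lemma forest_polyS0 (N : nat) : forest_poly N.+1 0 = 0.
Proof. by rewrite /forest_poly big1 // => i _; rewrite /forest_coef /= mul0r. Qed.

Lemma forest_polySS (N r : nat) :
  forest_poly N.+1 r.+1 = b * forest_poly N r + a * forest_tail_poly N r.+1.
Proof.
rewrite /forest_poly /forest_tail_poly big_ord_recl /= forest_coef_rec subn0.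
under eq_bigr => i _ do rewrite /bump /= add1n subSS forest_coef_rec mulrDl.
rewrite big_split /= [in LHS]big_ord_recr /= (@forest_coef_small N r N.+1) // mul0r addr0.
rewrite addr0 [in RHS]big_ord_recl mulrDr !mulr_sumr subn0 -!addrA.
congr (_ + (_ + _)).
- by rewrite expr0 !mul1r exprS; ring.
- apply: eq_bigr => i _.
  rewrite (_ : (N - i = (N - i.+1).+1)%N); last by have := ltn_ord i; lia.
  by rewrite !exprS; ring.
- by apply: eq_bigr => i _; rewrite exprS; ring.
Qed.
End ForestPoly.

Lemma forest_countE (a b N r : nat) :
  (forest_count a b N r)%:R = forest_poly a%:R b%:R N r.
Proof.
elim: N r => [|N IH] [|r]; rewrite ?forest_poly0r ?forest_polyS0 //=.
rewrite forest_polySS -sum_forest_poly natrD !natrM natr_sum IH.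
by under eq_bigr do rewrite IH.
Qed.

Lemma forest_coef_narayana (n k : nat) : (0 < k < n)%N ->
  forest_coef n 1 (n - k) = narayana n.-1 k.
Proof.
case: n k => [|[|p]] [|q] // /andP [_ qp].
rewrite /forest_coef /narayana !succnK subSS subn1 succnK.
have [M eM] : exists M, (p.+1 - q = M.+1)%N by exists (p - q)%N; lia.
rewrite eM /= -eM (_ : M = p - q)%N; last by lia.
rewrite -subSS !bin_sub; try lia.
by rewrite !natrM !natr_bin_diag; field; field_nat_side.
Qed.

Lemma forest_poly_narayana (a b : rat) (n : nat) : (1 < n)%N ->
  forest_poly a b n 1 = \sum_(1 <= k < n) narayana n.-1 k * (a ^+ (n - k) * b ^+ k).
Proof.
move=> n1; rewrite /forest_poly.
rewrite -(big_mkord xpredT (fun i => forest_coef n 1 i * (a ^+ i * b ^+ (n - i)))).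
rewrite big_ltn // big_nat_recr //=; last lia.
have coef_ends : forest_coef n 1 0 = 0 /\ forest_coef n 1 n = 0.
  rewrite /forest_coef /= !ifF ?eqxx 1?(@bin_small (n - 1 - 1) n.-1) //; try lia.
  by rewrite muln0 mulr0.
rewrite coef_ends.1 coef_ends.2 !mul0r add0r addr0 big_nat_rev.
apply: eq_big_nat => k /andP [k1 kn]; rewrite add1n subSS -forest_coef_narayana ?k1 //.
by rewrite subKn 1?mulrC 1?ltnW.
Qed.

Theorem theorem32 (l m : nat) (hl : (0 < l)%N) (hm : (0 < m)%N) (n : nat)
    (hn : (1 < n)%N) :
  exists c : nat, tA_is (Smat l m) n c /\
    c%:R = \sum_(1 <= k < n) narayana n.-1 k * (l%:R ^+ (n - k) * (l + m)%:R ^+ k) :> rat.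
Proof.
exists (forest_count l (l + m) n 1); split; first exact: tA_is_forest_count.
by rewrite forest_countE forest_poly_narayana.
Qed.
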